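(* Let $d\ge2$ and $\gamma\ge2d$. The set $$\mathcal V=\{v\in\mathcal R^{(\gamma)}_\infty: v+w\notin\mathcal R^{(\gamma)}_\infty\text{ for every nonzero } w\in f^{(d,\gamma)}\cdot\ell^\infty(\mathbb Z^d,\mathbb Z)\}$$ is a dense $G_\delta$ subset of $\mathcal R^{(\gamma)}_\infty$ (in the product topology).
   Context: $f^{(d,\gamma)}=\gamma-\sum_{i=1}^d(u_i+u_i^{-1})$, acting on $h\in\ell^\infty(\mathbb Z^d,\mathbb Z)$ by $(f^{(d,\gamma)}\cdot h)_{\mathbf n}=\gamma h_{\mathbf n}-\sum_i(h_{\mathbf n+\mathbf e^{(i)}}+h_{\mathbf n-\mathbf e^{(i)}})$. For nonempty $F\subset\mathbb Z^d$, $\mathsf N_F(\mathbf n)=|F\cap\{\mathbf n\pm\mathbf e^{(i)}\}|$. $\mathcal R^{(\gamma)}_\infty=\{v\in\{0,\dots,\gamma-1\}^{\mathbb Z^d}:$ for every finite nonempty $F\subset\mathbb Z^d$ there is $\mathbf n\in F$ with $v_{\mathbf n}\ge\mathsf N_F(\mathbf n)\}$. *)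

From HB Require Import structures.
From mathcomp Require Import all_boot all_order all_algebra.
Set Implicit Arguments. Unset Strict Implicit. Unset Printing Implicit Defensive.
Import Order.TTheory GRing.Theory Num.Theory.
Local Open Scope ring_scope.

Definition point (d : nat) := {ffun 'I_d -> int}.

Definition padd d (n m : point d) : point d := [ffun j => n j + m j].
Definition psub d (n m : point d) : point d := [ffun j => n j - m j].
Definition unitv d (i : 'I_d) : point d := [ffun j => ((i == j) : nat)%:Z].

Definition config (d : nat) := point d -> int.

Definition nbrs d (n : point d) : seq (point d) :=
  flatten [seq [:: padd n (unitv i); psub n (unitv i)] | i <- enum 'I_d].

Definition NF d (F : seq (point d)) (n : point d) : nat :=
  count (fun m => m \in F) (nbrs n).

Definition Rinf (d gamma : nat) (v : config d) : Prop :=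
  (forall n, 0 <= v n /\ v n < gamma%:Z) /\
  (forall F : seq (point d), F <> [::] ->
     exists2 n, n \in F & (NF F n)%:Z <= v n).

Arguments Rinf : clear implicits.

Definition bounded d (h : config d) : Prop :=
  exists B : int, forall n, `|h n| <= B.

Definition fact_f (d gamma : nat) (h : config d) : config d :=
  fun n => gamma%:Z * h n
           - \sum_(i < d) (h (padd n (unitv i)) + h (psub n (unitv i))).

Arguments fact_f : clear implicits.

Definition cadd d (v w : config d) : config d := fun n => v n + w n.

Definition Vset (d gamma : nat) (v : config d) : Prop :=
  Rinf d gamma v /\
  forall h : config d, bounded h -> (exists n, fact_f d gamma h n != 0) ->
    ~ Rinf d gamma (cadd v (fact_f d gamma h)).

Arguments Vset : clear implicits.

(* Product topology (subspace topology on S): basic open sets are cylinders *)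
Definition agree_on d (F : seq (point d)) (x y : config d) : Prop :=
  forall p, p \in F -> y p = x p.

Definition open_in d (S U : config d -> Prop) : Prop :=
  forall x, S x -> U x ->
    exists F : seq (point d), forall y, S y -> agree_on F x y -> U y.

Definition dense_in d (S A : config d -> Prop) : Prop :=
  forall U, open_in S U -> (exists x, S x /\ U x) ->
    exists y, [/\ S y, U y & A y].

Definition Gdelta_in d (S A : config d -> Prop) : Prop :=
  exists U : nat -> config d -> Prop,
    (forall k, open_in S (U k)) /\
    (forall x, S x -> (A x <-> forall k, U k x)).

(* If y and y + f.h are in R with h bounded, look at the maximum M
   of h: by a discrete maximum principle every point n of the top level set L
   of h satisfies y n + 1 <= N_L(n) (when (gamma - 2d)(M - 1) >= 0), so L is
   infinite (the defining condition of R fails on finite L) and no point of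
   L can have few neighbours in L.  Symmetrically for the minimum.  Hence a y
   with suitable "witness" points everywhere outside a finite window admits no
   nonzero f.h: for gamma > 2d h must vanish, for gamma = 2d it is constant.

   Off any finite window, x in R is replaced by a checkerboard of
   values gamma - 1 and 0 (gamma > 2d), or by gamma - 1 outside a large box
   (gamma = 2d, using that the complement of a box is connected when d >= 2);
   both are rigid.

   V is the intersection over k of the interiors of the complements
   of the sets of configurations movable by some f.h with |h| <= k and f.h
   nonzero in the box of radius k; that rigid configurations lie in these
   interiors is a compactness (Koenig's lemma) argument over {-k..k}^(Z^d). *)

From Stdlib Require Import Classical IndefiniteDescription FunctionalExtensionality.
From HB Require Import structures.
From mathcomp Require Import all_boot all_order all_algebra.
From mathcomp Require Import zify.
Set Implicit Arguments. Unset Strict Implicit. Unset Printing Implicit Defensive.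
Import Order.TTheory GRing.Theory Num.Theory.
Local Open Scope ring_scope.

Section Lattice.
Variable d : nat.
Implicit Types (n p q r : point d) (i j : 'I_d).

Lemma mem_nbrs r n :
  (r \in nbrs n) = [exists i, (r == padd n (unitv i)) || (r == psub n (unitv i))].
Proof.
apply/idP/existsP.
- by case/flattenP=> s /mapP[i _ ->]; rewrite !inE => H; exists i.
- case=> i H; apply/flattenP; exists [:: padd n (unitv i); psub n (unitv i)].
    by apply/mapP; exists i; rewrite ?mem_enum.
  by rewrite !inE.
Qed.

Lemma nbrs_padd n i : padd n (unitv i) \in nbrs n.
Proof. by rewrite mem_nbrs; apply/existsP; exists i; rewrite eqxx. Qed.

Lemma nbrs_psub n i : psub n (unitv i) \in nbrs n.
Proof. by rewrite mem_nbrs; apply/existsP; exists i; rewrite eqxx orbT. Qed.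

Lemma nbrs_sym r n : r \in nbrs n -> n \in nbrs r.
Proof.
have psub_padd i : psub (padd n (unitv i)) (unitv i) = n.
  by apply/ffunP=> j; rewrite !ffunE addrK.
have padd_psub i : padd (psub n (unitv i)) (unitv i) = n.
  by apply/ffunP=> j; rewrite !ffunE subrK.
rewrite mem_nbrs => /existsP[i /orP[]/eqP->].
- by rewrite -{1}(psub_padd i) nbrs_psub.
- by rewrite -{1}(padd_psub i) nbrs_padd.
Qed.

Lemma size_nbrs n : size (nbrs n) = (2 * d)%N.
Proof.
rewrite /nbrs size_flatten /shape -map_comp sumnE big_map big_enum /=.
by rewrite (eq_bigr (fun=> 2%N)) // sum_nat_const card_ord mulnC.
Qed.

Lemma sum_nbrs n (F : point d -> int) :
  \sum_(r <- nbrs n) F r = \sum_(i < d) (F (padd n (unitv i)) + F (psub n (unitv i))).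
Proof.
rewrite /nbrs big_flatten /= big_map big_enum /=.
by apply: eq_bigr => i _; rewrite !big_cons big_nil addr0.
Qed.

Definition nbcount (P : pred (point d)) n : nat := count P (nbrs n).

Lemma nbcount_le P n : (nbcount P n <= 2 * d)%N.
Proof. by rewrite /nbcount -(size_nbrs n) count_size. Qed.

Lemma nbcount_lt P n r : r \in nbrs n -> ~~ P r -> (nbcount P n < 2 * d)%N.
Proof.
move=> rn Pr; rewrite /nbcount -(size_nbrs n) -(count_predC P) -{1}[count P _]addn0.
by rewrite ltn_add2l -has_count; apply/hasP; exists r.
Qed.

Lemma nbcount0 P n : ~~ has P (nbrs n) -> nbcount P n = 0%N.
Proof. by rewrite has_count -leqNgt leqn0 => /eqP. Qed.

End Lattice.

Section Laplacian.
Variables d gamma : nat.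
Implicit Types (n p q : point d) (h : config d).

Local Notation lap := (fact_f d gamma).

Lemma lap_local h h' n :
  (forall q, q \in n :: nbrs n -> h q = h' q) -> lap h n = lap h' n.
Proof.
move=> hh'; rewrite /fact_f hh' ?mem_head //; congr (_ - _); apply: eq_bigr => i _.
by rewrite !hh' // inE ?nbrs_padd ?nbrs_psub orbT.
Qed.

Lemma lap_opp h n : lap (fun p => - h p) n = - lap h n.
Proof.
rewrite /fact_f -(sum_nbrs n (fun r => - h r)) -sum_nbrs sumrN mulrN.
by rewrite opprK opprB addrC.
Qed.

Lemma lap_const h c n : (forall p, h p = c) -> lap h n = (gamma%:Z - (2 * d)%N%:Z) * c.
Proof.
move=> hc; rewrite /fact_f (eq_bigr (fun=> c + c)) => [|i _]; last by rewrite !hc.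
by rewrite sumr_const card_ord hc -mulr2n -mulrnA mulrBl -mulr_natl natz mulnC.
Qed.

Lemma sum_le_max (s : seq (point d)) h (M : int) : (forall q, h q <= M) ->
  \sum_(q <- s) h q + (count (fun q => h q != M) s)%:Z <= (size s)%:Z * M.
Proof.
move=> hM; elim: s => [|x s IH]; first by rewrite big_nil mul0r.
rewrite big_cons /=; set S := \sum_(q <- s) h q in IH *.
by case: eqP => [->|hxM] /=; have := hM x; nia.
Qed.

Definition level h (M : int) : pred (point d) := fun q => h q == M.

Lemma lap_at_max h (M : int) n : (forall q, h q <= M) -> h n = M ->
  (gamma%:Z - (2 * d)%N%:Z) * M + ((2 * d)%N%:Z - (nbcount (level h M) n)%:Z)
  <= lap h n.
Proof.
move=> hM hn; have := sum_le_max (nbrs n) hM; rewrite /fact_f -sum_nbrs size_nbrs hn.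
have := count_predC (level h M) (nbrs n); rewrite size_nbrs /nbcount.
have -> : count (predC (level h M)) (nbrs n) = count (fun q => h q != M) (nbrs n) by [].
set S := \sum_(r <- nbrs n) h r; nia.
Qed.

End Laplacian.

Lemma bounded_max d (h : config d) :
  bounded h -> exists M, (forall p, h p <= M) /\ exists p, h p = M.
Proof.
case=> B hB; apply: NNPP => noMax.
have below j : forall p, h p <= `|B| - j%:Z.
  elim: j => [|j IH] p; first by have := hB p; lia.
  have : h p != `|B| - j%:Z.
    by apply/eqP => hp; apply: noMax; exists (`|B| - j%:Z); split=> //; exists p.
  by have := IH p; lia.
by have := below (2 * absz B).+1%N [ffun=> 0]; have := hB [ffun=> 0]; lia.
Qed.

Lemma bounded_min d (h : config d) :
  bounded h -> exists c, (forall p, c <= h p) /\ exists p, h p = c.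
Proof.
case=> B hB; have [|M [hM [p hp]]] := @bounded_max d (fun p => - h p).
  by exists B => p; rewrite normrN.
by exists (- M); split=> [q|]; [have := hM q; lia | exists p; rewrite -hp opprK].
Qed.

Section Rigidity.
Variables d gamma : nat.
Implicit Types (n p q : point d) (h y : config d) (K : seq (point d)).

Local Notation lap := (fact_f d gamma).

Lemma nbcount_level_opp h c n :
  nbcount (level (fun p => - h p) (- c)) n = nbcount (level h c) n.
Proof. by apply: eq_count => q; rewrite /level eqr_opp. Qed.

Lemma top_level_count y h (M : int) n :
  (forall q, h q <= M) -> h n = M -> y n + lap h n < gamma%:Z ->
  0 <= (gamma%:Z - (2 * d)%N%:Z) * (M - 1) ->
  y n + 1 <= (nbcount (level h M) n)%:Z.
Proof. by move=> hM hn; have := lap_at_max gamma hM hn; nia. Qed.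

Lemma bottom_level_count y h (c : int) n :
  (forall q, c <= h q) -> h n = c -> 0 <= y n + lap h n ->
  0 <= (gamma%:Z - (2 * d)%N%:Z) * (- c - 1) ->
  gamma%:Z <= y n + (nbcount (level h c) n)%:Z.
Proof.
move=> hc hn; have hM q : - h q <= - c by rewrite lerN2.
have := lap_at_max gamma hM (congr1 -%R hn).
by rewrite lap_opp nbcount_level_opp; nia.
Qed.

Lemma level_unbounded y (L : pred (point d)) :
  Rinf d gamma y -> (exists q, L q) -> (forall n, L n -> y n + 1 <= (nbcount L n)%:Z) ->
  forall K, exists q, L q /\ q \notin K.
Proof.
move=> [_ Ry] [q0 Lq0] hL K; apply: NNPP => hK.
have inK q : L q -> q \in K.
  by move=> Lq; case: (boolP (q \in K)) => // qK; case: hK; exists q.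
have [|n] := Ry [seq q <- K | L q].
  by apply/eqP; rewrite -has_filter; apply/hasP; exists q0; rewrite ?inK.
rewrite mem_filter => /andP[Ln _].
have -> : NF [seq q <- K | L q] n = nbcount L n.
  by apply: eq_count => q; rewrite mem_filter andb_idr // => /inK.
by have := hL n Ln; lia.
Qed.

Definition low_witness K y := forall P : pred (point d),
  (exists q, P q /\ q \notin K) -> exists n, P n /\ (nbcount P n)%:Z <= y n.

Definition high_witness K y := forall P : pred (point d),
  (exists q, P q /\ q \notin K) -> exists n, P n /\ y n + (nbcount P n)%:Z < gamma%:Z.

Definition cut_witness K y := forall P : pred (point d),
  (exists a, P a /\ a \notin K) -> (exists b, ~~ P b /\ b \notin K) ->
  exists n, P n /\ (nbcount P n)%:Z <= y n.

Lemma top_level y h (M : int) :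
  Rinf d gamma y -> Rinf d gamma (cadd y (lap h)) ->
  (forall q, h q <= M) -> (exists q, h q = M) ->
  0 <= (gamma%:Z - (2 * d)%N%:Z) * (M - 1) ->
  (forall n, level h M n -> y n + 1 <= (nbcount (level h M) n)%:Z) /\
  (forall K, exists q, level h M q /\ q \notin K).
Proof.
move=> Ry [Ry' _] hM [q hq] hpos.
have count n : level h M n -> y n + 1 <= (nbcount (level h M) n)%:Z.
  by move=> /eqP hn; apply: top_level_count hpos => //; case: (Ry' n).
by split=> //; apply: level_unbounded count => //; exists q; apply/eqP.
Qed.

(* Symmetrically the bottom level set is infinite, and y + N_L >= gamma on it;
   infiniteness follows from top_level applied to - h and y + f.h. *)
Lemma bottom_level y h (c : int) :
  Rinf d gamma y -> Rinf d gamma (cadd y (lap h)) ->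
  (forall q, c <= h q) -> (exists q, h q = c) ->
  0 <= (gamma%:Z - (2 * d)%N%:Z) * (- c - 1) ->
  (forall n, level h c n -> gamma%:Z <= y n + (nbcount (level h c) n)%:Z) /\
  (forall K, exists q, level h c q /\ q \notin K).
Proof.
move=> Ry Ry' hc [q hq] hpos; split.
  by move=> n /eqP hn; apply: bottom_level_count hpos => //; case: Ry' => /(_ n) [].
have hM p : - h p <= - c by rewrite lerN2.
have back : Rinf d gamma (cadd (cadd y (lap h)) (lap (fun p => - h p))).
  suff -> : cadd (cadd y (lap h)) (lap (fun p => - h p)) = y by [].
  by apply: functional_extensionality => n; rewrite /cadd lap_opp addrK.
have [count _] := top_level Ry' back hM (ex_intro _ q (congr1 -%R hq)) hpos.
apply: level_unbounded Ry' _ _; first by exists q; apply/eqP.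
by move=> n Ln; rewrite -nbcount_level_opp; apply: count; rewrite /level eqr_opp.
Qed.

Definition rigid y :=
  forall h, bounded h -> Rinf d gamma (cadd y (lap h)) -> forall n, lap h n = 0.

Lemma rigid_supercritical y F K : (2 * d < gamma)%N -> Rinf d gamma y ->
  low_witness F y -> high_witness K y -> rigid y.
Proof.
move=> hg Ry low high h hb Ry' n.
have [M [hM hMe]] := bounded_max hb; have [c [hc hce]] := bounded_min hb.
have M_le0 : M <= 0.
  rewrite leNgt; apply/negP => M_gt0.
  have pos : 0 <= (gamma%:Z - (2 * d)%N%:Z) * (M - 1) by nia.
  have [count unb] := top_level Ry Ry' hM hMe pos.
  have [m [Lm hm]] := low _ (unb F); have := count m Lm; lia.
have c_ge0 : 0 <= c.
  rewrite leNgt; apply/negP => c_lt0.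
  have pos : 0 <= (gamma%:Z - (2 * d)%N%:Z) * (- c - 1) by nia.
  have [count unb] := bottom_level Ry Ry' hc hce pos.
  have [m [Lm hm]] := high _ (unb K); have := count m Lm; lia.
rewrite (@lap_const d gamma h 0) ?mulr0 // => p.
by have := hM p; have := hc p; lia.
Qed.

(* Rigidity criterion for gamma = 2d: here f kills constants, and a
   nonconstant h has infinite top and bottom level sets. *)
Lemma rigid_critical y K : gamma = (2 * d)%N -> Rinf d gamma y -> cut_witness K y -> rigid y.
Proof.
move=> hg Ry cut h hb Ry' n.
have [M [hM hMe]] := bounded_max hb; have [c [hc hce]] := bounded_min hb.
have flat (a : int) : 0 <= (gamma%:Z - (2 * d)%N%:Z) * a by rewrite hg subrr mul0r.
case: (eqVneq c M) => [eMc|nMc].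
  rewrite (@lap_const d gamma h M) ?hg ?subrr ?mul0r // => p.
  by apply/eqP; rewrite eq_le hM -eMc hc.
have [count unbM] := top_level Ry Ry' hM hMe (flat _).
have [_ unbc] := bottom_level Ry Ry' hc hce (flat _).
have [b [/eqP hb_c bK]] := unbc K.
have Pb : ~~ level h M b by rewrite /level hb_c.
have [m [Lm hm]] := cut _ (unbM K) (ex_intro _ b (conj Pb bK)).
by have := count m Lm; lia.
Qed.

End Rigidity.

Section Coordinates.
Variable d : nat.
Implicit Types (n p q r : point d) (i j k : 'I_d).

Definition upd p k (t : int) : point d := [ffun j => if j == k then t else p j].

Lemma upd_ne p k t i : i != k -> upd p k t i = p i.
Proof. by move=> ik; rewrite ffunE (negbTE ik). Qed.

Lemma upd_at p k t : upd p k t k = t.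
Proof. by rewrite ffunE eqxx. Qed.

Lemma upd_upd p k s t : upd (upd p k s) k t = upd p k t.
Proof. by apply/ffunP => j; rewrite !ffunE; case: eqP. Qed.

Lemma upd_id q i : upd q i (q i) = q.
Proof. by apply/ffunP => j; rewrite ffunE; case: eqP => // ->. Qed.

Lemma padd_upd q i : padd q (unitv i) = upd q i (q i + 1).
Proof.
apply/ffunP => j; rewrite !ffunE.
by case: eqP => [->|/eqP ij]; rewrite ?eqxx // eq_sym (negbTE ij) addr0.
Qed.

Lemma psub_upd q i : psub q (unitv i) = upd q i (q i - 1).
Proof.
apply/ffunP => j; rewrite !ffunE.
by case: eqP => [->|/eqP ij]; rewrite ?eqxx // eq_sym (negbTE ij) subr0.
Qed.

Definition l1norm q := (\sum_i absz (q i))%N.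

Lemma abs_le_l1norm q i : (absz (q i) <= l1norm q)%N.
Proof. by rewrite /l1norm (bigD1 i) //= leq_addr. Qed.

Lemma l1norm_upd q i (t : int) :
  l1norm (upd q i t) = (absz t + \sum_(j | j != i) absz (q j))%N.
Proof.
rewrite /l1norm (bigD1 i) //= upd_at; congr addn.
by apply: eq_bigr => j ji; rewrite upd_ne.
Qed.

Lemma l1norm_split q i : l1norm q = (absz (q i) + \sum_(j | j != i) absz (q j))%N.
Proof. by rewrite -l1norm_upd upd_id. Qed.

Lemma odd_l1norm_nbrs q r : r \in nbrs q -> odd (l1norm r) = ~~ odd (l1norm q).
Proof.
rewrite mem_nbrs => /existsP[i /orP[]/eqP->];
  by rewrite ?padd_upd ?psub_upd l1norm_upd (l1norm_split q i) !oddD; lia.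
Qed.

Lemma step_out q i : exists r,
  [/\ r \in nbrs q, absz (r i) = (absz (q i)).+1 & l1norm r = (l1norm q).+1].
Proof.
have [qi_ge0|qi_lt0] := lerP 0 (q i).
  exists (padd q (unitv i)); rewrite nbrs_padd padd_upd l1norm_upd upd_at (l1norm_split q i).
  by split=> //; lia.
exists (psub q (unitv i)); rewrite nbrs_psub psub_upd l1norm_upd upd_at (l1norm_split q i).
by split=> //; lia.
Qed.

Definition inbox (R : nat) q := [forall i, (absz (q i) <= R)%N].

Definition box (R : nat) : seq (point d) :=
  [seq [ffun i => (f i : nat)%:Z - R%:Z] | f : {ffun 'I_d -> 'I_(2 * R).+1} <- enum {ffun 'I_d -> 'I_(2 * R).+1}].

Lemma mem_box R q : (q \in box R) = inbox R q.
Proof.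
apply/idP/forallP.
  case/mapP => f _ -> i; rewrite ffunE.
  by have := ltn_ord (f i); move: (nat_of_ord (f i)) => m; lia.
move=> qR; apply/mapP.
have shift i : (absz (q i + R%:Z)%R < (2 * R).+1)%N by have := qR i; lia.
exists [ffun i => Ordinal (shift i)]; first by rewrite mem_enum.
by apply/ffunP => i; rewrite !ffunE /=; have := qR i; lia.
Qed.

Lemma inbox_l1norm q : inbox (l1norm q) q.
Proof. by apply/forallP => i; apply: abs_le_l1norm. Qed.

Lemma inbox_mono R R' q : (R <= R')%N -> inbox R q -> inbox R' q.
Proof. by move=> RR' /forallP qR; apply/forallP => i; apply: leq_trans (qR i) RR'. Qed.

End Coordinates.

Section Patching.
Variables d gamma : nat.
Implicit Types (n p q r : point d) (x y : config d) (F : seq (point d)).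

Lemma Rinf_patch x y (W : pred (point d)) :
  Rinf d gamma x -> (forall n, W n -> y n = x n) ->
  (forall n, 0 <= y n /\ y n < gamma%:Z) ->
  (forall S : seq (point d), (exists q, q \in S /\ ~~ W q) ->
     exists2 n, n \in S & (NF S n)%:Z <= y n) ->
  Rinf d gamma y.
Proof.
move=> [_ Rx] yx ybound out; split=> // S S0.
have [leaves|inW] := classic (exists q, q \in S /\ ~~ W q); first exact: out.
have [n nS hn] := Rx S S0; exists n => //; rewrite yx //.
by apply: NNPP => nW; apply: inW; exists n; split=> //; apply/negP.
Qed.

Definition adjacent F q := has (fun r => r \in F) (nbrs q).

Definition nbhd F := flatten [seq nbrs p | p <- F].

Lemma mem_nbhd F q : (q \in nbhd F) = adjacent F q.
Proof.
apply/flattenP/hasP => [[s /mapP[p pF ->] qp]|[r rq rF]].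
  by exists p => //; apply: nbrs_sym.
by exists (nbrs r); [apply/mapP; exists r | apply: nbrs_sym].
Qed.

Definition nbhd2 F := F ++ nbhd F ++ nbhd (nbhd F).

Lemma notin_nbhd2 F q : q \notin nbhd2 F ->
  [/\ q \notin F, ~~ adjacent F q & forall r, r \in nbrs q -> r \notin F /\ ~~ adjacent F r].
Proof.
rewrite /nbhd2 !mem_cat !mem_nbhd !negb_or => /and3P[qF qadj qadj2]; split=> // r rq.
split; first by apply: contra qadj => rF; apply/hasP; exists r.
by apply: contra qadj2 => radj; apply/hasP; exists r; rewrite ?mem_nbhd.
Qed.

Definition checkerboard x F q : int :=
  if q \in F then x q
  else if adjacent F q || ~~ odd (l1norm q) then gamma%:Z - 1 else 0.

Section Checkerboard.
Hypothesis gamma_gt : (2 * d < gamma)%N.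
Variables (x : config d) (F : seq (point d)).

Local Notation y := (checkerboard x F).

Lemma checkerboard_top q : q \notin F -> adjacent F q || ~~ odd (l1norm q) ->
  y q = gamma%:Z - 1.
Proof. by rewrite /checkerboard => /negbTE -> ->. Qed.

Lemma checkerboard_bottom q : q \notin F -> ~~ adjacent F q -> odd (l1norm q) -> y q = 0.
Proof. by rewrite /checkerboard => /negbTE -> /negbTE -> ->. Qed.

(* A set meeting the complement of F contains a point with value gamma - 1,
   or an isolated odd point. *)
Lemma checkerboard_low : low_witness F y.
Proof.
move=> P [q [Pq qF]].
have [top|] := boolP (adjacent F q || ~~ odd (l1norm q)).
  by exists q; split=> //; rewrite checkerboard_top //; have := nbcount_le P q; lia.
rewrite negb_or negbK => /andP[qadj qodd].
have [/hasP[r rq Pr]|noP] := boolP (has P (nbrs q)).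
  exists r; split=> //; rewrite checkerboard_top; first by have := nbcount_le P r; lia.
    by apply: contra qadj => rF; apply/hasP; exists r.
  by rewrite (odd_l1norm_nbrs rq) qodd orbT.
by exists q; split=> //; rewrite checkerboard_bottom // nbcount0.
Qed.

(* A set reaching two steps away from F contains a point with value 0,
   or an even point none of whose neighbours lies in the set. *)
Lemma checkerboard_high : high_witness gamma (nbhd2 F) y.
Proof.
move=> P [q [Pq /notin_nbhd2[qF qadj far]]].
have [qodd|qeven] := boolP (odd (l1norm q)).
  by exists q; split=> //; rewrite checkerboard_bottom //; have := nbcount_le P q; lia.
have [/hasP[r rq Pr]|noP] := boolP (has P (nbrs q)).
  have [rF radj] := far r rq.
  exists r; split=> //; rewrite checkerboard_bottom ?(odd_l1norm_nbrs rq) //.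
  by have := nbcount_le P r; lia.
by exists q; split=> //; rewrite checkerboard_top ?qeven ?orbT // nbcount0 //; lia.
Qed.

Lemma checkerboard_Rinf : Rinf d gamma x -> Rinf d gamma y.
Proof.
move=> Rx; apply: (Rinf_patch Rx (W := fun q => q \in F)).
- by move=> n nF; rewrite /checkerboard nF.
- move=> q; rewrite /checkerboard; case: ifP => _; first by case: Rx => /(_ q).
  by case: ifP; lia.
- move=> S [q [qS qF]]; have [n [nS hn]] := checkerboard_low (ex_intro _ q (conj qS qF)).
  by exists n.
Qed.

Lemma checkerboard_rigid : Rinf d gamma x -> rigid gamma y.
Proof.
move=> Rx; exact: rigid_supercritical gamma_gt (checkerboard_Rinf Rx)
  checkerboard_low checkerboard_high.
Qed.

End Checkerboard.

End Patching.

Section OutsideBox.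
Variables (d R : nat) (P : pred (point d)).
Hypothesis d_ge2 : (2 <= d)%N.
Implicit Types (a b n p q r : point d) (i j k : 'I_d).

Definition closed_outside :=
  forall n, ~~ inbox R n -> P n -> forall r, r \in nbrs n -> P r.

Section Closed.
Hypothesis closedP : closed_outside.

Lemma move_coord p k i : i != k -> (R < absz (p i))%N -> P p -> forall t, P (upd p k t).
Proof.
move=> ik pi Pp.
have out t : ~~ inbox R (upd p k t).
  by apply/forallPn; exists i; rewrite upd_ne // -ltnNge.
have up (m : nat) : P (upd p k (p k + m%:Z)).
  elim: m => [|m IH]; first by rewrite addr0 upd_id.
  have := closedP (out _) IH (nbrs_padd (upd p k (p k + m%:Z)) k).
  by rewrite padd_upd upd_at upd_upd -addrA -PoszD addn1.
have down (m : nat) : P (upd p k (p k - m%:Z)).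
  elim: m => [|m IH]; first by rewrite subr0 upd_id.
  have := closedP (out _) IH (nbrs_psub (upd p k (p k - m%:Z)) k).
  by rewrite psub_upd upd_at upd_upd -addrA -opprD -PoszD addn1.
move=> t; have [t_ge|t_lt] := lerP (p k) t.
  by have := up (absz (t - p k)); congr (P (upd _ _ _)); lia.
by have := down (absz (p k - t)); congr (P (upd _ _ _)); lia.
Qed.

Lemma reach_along p j b : P p -> (R < absz (p j))%N -> p j = b j -> P b.
Proof.
move=> Pp pj pjb; pose mix (s : seq 'I_d) := [ffun k => if k \in s then b k else p k].
have mixP s : j \notin s -> P (mix s).
  elim: s => [|k s IH]; first by move=> _; rewrite (_ : mix [::] = p) //; apply/ffunP => k; rewrite ffunE.
  rewrite inE negb_or => /andP[jk js].
  have -> : mix (k :: s) = upd (mix s) k (b k).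
    by apply/ffunP => l; rewrite !ffunE inE; case: eqP => [->|].
  apply: (move_coord jk _ (IH js)).
  by rewrite /mix ffunE (negbTE js).
have := mixP [seq k <- enum 'I_d | k != j]; rewrite mem_filter eqxx => /(_ isT).
congr (P _); apply/ffunP => k; rewrite ffunE mem_filter mem_enum andbT.
by case: eqP => [->|].
Qed.

End Closed.

Lemma other_coord i : exists k : 'I_d, k != i.
Proof.
have d_gt0 : (0 < d)%N by apply: leq_trans d_ge2.
case: i => [[|k] ki].
  by exists (Ordinal d_ge2); apply/eqP => /(congr1 val).
by exists (Ordinal d_gt0); apply/eqP => /(congr1 val).
Qed.

(* For d >= 2 the complement of a box is connected: P cannot hold at one
   point outside the box and fail at another unless its boundary meets the
   complement of the box. *)
Lemma outside_connected a b : ~~ inbox R a -> P a -> ~~ inbox R b -> ~~ P b ->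
  exists n, [/\ ~~ inbox R n, P n & exists2 r, r \in nbrs n & ~~ P r].
Proof.
move=> aout Pa bout Pb; apply: NNPP => noexit.
have closedP : closed_outside.
  move=> n nout Pn r rn; apply: contraNT Pb => Pr; exfalso.
  by apply: noexit; exists n; split=> //; exists r.
move/forallPn: aout => [i]; rewrite -ltnNge => ai.
move/forallPn: bout => [j]; rewrite -ltnNge => bj.
move/negP: Pb; apply.
have [eij|ij] := eqVneq i j.
  subst j; have [k ki] := other_coord i.
  have ik : i != k by rewrite eq_sym.
  have P1 : P (upd a k (R.+1)%:Z) := move_coord closedP ik ai Pa _.
  have P2 : P (upd (upd a k (R.+1)%:Z) i (b i)).
    by apply: (move_coord closedP ki) P1 _; rewrite upd_at.
  by apply: (reach_along (j := i) closedP P2); rewrite upd_at.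
have P1 : P (upd a j (b j)) := move_coord closedP ij ai Pa _.
by apply: (reach_along (j := j) closedP P1); rewrite upd_at.
Qed.

End OutsideBox.

Lemma exists_max_seq (T : eqType) (s : seq T) (f : T -> nat) :
  s != [::] -> exists2 q, q \in s & forall p, p \in s -> (f p <= f q)%N.
Proof.
elim: s => [//|x s IH] _; have [->|/IH[q qs qmax]] := eqVneq s [::].
  by exists x => [|p]; rewrite ?mem_head // inE => /eqP->.
have [fx_le|fx_gt] := leqP (f x) (f q).
  by exists q => [|p]; rewrite ?inE ?qs ?orbT // => /orP[/eqP->|/qmax].
exists x => [|p]; rewrite ?mem_head // inE => /orP[/eqP->//|/qmax fp].
exact: leq_trans fp (ltnW fx_gt).
Qed.

Section Frame.
Variables d gamma : nat.
Hypothesis gamma_eq : gamma = (2 * d)%N.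
Hypothesis d_ge2 : (2 <= d)%N.
Variables (x : config d) (R : nat).
Implicit Types (n p q r : point d).

Definition frame q : int := if inbox R q then x q else gamma%:Z - 1.

(* A point of S outside the box with maximal l^1 norm has a neighbour
   farther out which is not in S. *)
Lemma frame_Rinf : Rinf d gamma x -> Rinf d gamma frame.
Proof.
move=> Rx; apply: (Rinf_patch Rx (W := inbox R)).
- by move=> n nR; rewrite /frame nR.
- move=> q; rewrite /frame; case: ifP => _; first by case: Rx => /(_ q).
  by rewrite gamma_eq; lia.
move=> S [q0 [q0S q0out]].
have [|q] := exists_max_seq (@l1norm d) (s := [seq q <- S | ~~ inbox R q]).
  by rewrite -has_filter; apply/hasP; exists q0.
rewrite mem_filter => /andP[qout qS] qmax; exists q => //.
have [i qi] : exists i, (R < absz (q i))%N.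
  by move/forallPn: qout => [i]; rewrite -ltnNge; exists i.
have [r [rq ri rnorm]] := step_out q i.
have rS : r \notin S.
  apply/negP => rS; have rout : ~~ inbox R r by apply/forallPn; exists i; rewrite -ltnNge ri ltnS ltnW.
  by have := qmax r; rewrite mem_filter rout rS rnorm ltnn => /(_ isT).
have := nbcount_lt (P := fun m => m \in S) rq rS.
rewrite /frame (negbTE qout) gamma_eq; change (NF S q) with (nbcount (fun m => m \in S) q).
lia.
Qed.

(* By connectedness of the complement of the box, a set splitting it has a
   boundary point outside the box, where the frame has value 2d - 1. *)
Lemma frame_cut : cut_witness (box d R) frame.
Proof.
move=> P [a [Pa]] + [b [Pb]]; rewrite !mem_box => aout bout.
have [n [nout Pn [r rn Pr]]] := outside_connected d_ge2 aout Pa bout Pb.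
exists n; split=> //; have := nbcount_lt rn Pr.
by rewrite /frame (negbTE nout) gamma_eq; lia.
Qed.

Lemma frame_rigid : Rinf d gamma x -> rigid gamma frame.
Proof. by move=> Rx; apply: rigid_critical gamma_eq (frame_Rinf Rx) frame_cut. Qed.

End Frame.

Section Compactness.
Variables (T : countType) (V : eqType) (vals : seq V).
Variables (Q : seq T -> (T -> V) -> Prop) (supp : seq T -> seq T).

Hypothesis Q_local :
  forall G h h', (forall p, p \in supp G -> h p = h' p) -> Q G h -> Q G h'.
Hypothesis Q_mono : forall G G' h, {subset G <= G'} -> Q G' h -> Q G h.

Definition valued (h : T -> V) := forall p, h p \in vals.

Definition extendable j (f : T -> V) := forall G, exists h,
  [/\ valued h, Q G h & forall p, (pickle p < j)%N -> h p = f p].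

Lemma extendable_step j f : extendable j f ->
  exists f', extendable j.+1 f' /\ forall p, (pickle p < j)%N -> f' p = f p.
Proof.
move=> ext; case Ej: (@pickle_inv T j) => [p|]; last first.
  exists f; split=> // G; have [h [hv hQ hf]] := ext G; exists h; split=> // q.
  rewrite ltnS leq_eqVlt => /orP[/eqP qj|]; last exact: hf.
  by move: Ej; rewrite -qj pickleK_inv.
have pj : pickle p = j by have := @pickle_invK T j; rewrite Ej.
pose set_p a q := if q == p then a else f q.
have below a q : (pickle q < j)%N -> set_p a q = f q.
  by rewrite /set_p; case: eqP => // -> ; rewrite pj ltnn.
suff [a exta] : exists a, extendable j.+1 (set_p a).
  by exists (set_p a); split=> //; apply: below.
apply: NNPP => none.
have [G noext] : exists G, forall a, a \in vals -> forall h, valued h -> Q G h ->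
    ~ (forall q, (pickle q < j.+1)%N -> h q = set_p a q).
  elim: vals => [|a l [G' noext']]; first by exists [::].
  have /not_all_ex_not[Ga noGa] : ~ extendable j.+1 (set_p a) by move=> ?; apply: none; exists a.
  have subl : {subset Ga <= Ga ++ G'} by move=> q qG; rewrite mem_cat qG.
  have subr : {subset G' <= Ga ++ G'} by move=> q qG; rewrite mem_cat qG orbT.
  exists (Ga ++ G') => b; rewrite inE => /orP[/eqP-> h hv hQ hagree|bl h hv hQ].
    by apply: noGa; exists h; split=> //; apply: Q_mono subl hQ.
  exact: noext' bl h hv (Q_mono subr hQ).
have [h [hv hQ hf]] := ext G.
apply: (noext _ (hv p) h hv hQ) => q; rewrite ltnS leq_eqVlt => /orP[/eqP qj|qj].
  have -> : q = p by apply: (pcan_inj (@pickleK T)); rewrite qj pj.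
  by rewrite /set_p eqxx.
by rewrite below ?hf.
Qed.

Lemma valued_compactness :
  (forall G, exists h, valued h /\ Q G h) -> exists h, valued h /\ forall G, Q G h.
Proof.
move=> sat; have [h0 _] := sat [::].
have ext0 : extendable 0 h0 by move=> G; have [h [hv hQ]] := sat G; exists h.
have step j f : exists f', extendable j f ->
    extendable j.+1 f' /\ forall p, (pickle p < j)%N -> f' p = f p.
  have [/extendable_step[f' hf']|noext] := classic (extendable j f); first by exists f'.
  by exists f.
pose next j f := proj1_sig (constructive_indefinite_description _ (step j f)).
have nextP j f : extendable j f ->
    extendable j.+1 (next j f) /\ forall p, (pickle p < j)%N -> next j f p = f p.
  by rewrite /next; case: constructive_indefinite_description.
pose fix fs j := if j is j'.+1 then next j' (fs j') else h0.
have fs_ext j : extendable j (fs j) by elim: j => //= j /nextP[].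
have fs_stable j p : (pickle p < j)%N -> fs j p = fs (pickle p).+1 p.
  elim: j => // j IH; rewrite ltnS leq_eqVlt => /orP[/eqP->//|pj] /=.
  by rewrite (proj2 (nextP _ _ (fs_ext j))) ?IH.
exists (fun p => fs (pickle p).+1 p); split.
  by move=> p; have [h [hv _ hf]] := fs_ext (pickle p).+1 [::]; rewrite -hf.
move=> G; pose j := (\sum_(p <- supp G) pickle p).+1.
have [h [_ hQ hf]] := fs_ext j G; apply: Q_local hQ => p pG.
have pj : (pickle p < j)%N by rewrite ltnS (big_rem p pG) leq_addr.
by rewrite hf // fs_stable.
Qed.

End Compactness.

Section Window.
Variables d gamma : nat.
Implicit Types (n p q : point d) (v x y : config d) (G : seq (point d)).

Local Notation lap := (fact_f d gamma).

Definition Rinf_on G v :=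
  (forall n, n \in G -> 0 <= v n /\ v n < gamma%:Z) /\
  (forall S : seq (point d), S <> [::] -> {subset S <= G} ->
     exists2 n, n \in S & (NF S n)%:Z <= v n).

Lemma Rinf_onW G v : Rinf d gamma v -> Rinf_on G v.
Proof. by case=> bnd cond; split=> [n _|S S0 _]; [apply: bnd | apply: cond]. Qed.

Lemma Rinf_on_mono G G' v : {subset G <= G'} -> Rinf_on G' v -> Rinf_on G v.
Proof.
move=> GG' [bnd cond]; split=> [n nG|S S0 SG]; first by apply/bnd/GG'.
by apply: cond => // q /SG /GG'.
Qed.

Lemma Rinf_on_ext G v v' : (forall n, n \in G -> v n = v' n) -> Rinf_on G v -> Rinf_on G v'.
Proof.
move=> vv' [bnd cond]; split=> [n nG|S S0 SG]; first by rewrite -vv' //; apply: bnd.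
by have [n nS hn] := cond S S0 SG; exists n; rewrite // -vv' ?SG.
Qed.

Lemma Rinf_of_windows v : (forall G, Rinf_on G v) -> Rinf d gamma v.
Proof.
move=> win; split=> [n|S S0]; first by case: (win [:: n]) => + _; apply; rewrite mem_head.
by case: (win S) => _; apply.
Qed.

Definition closure G := flatten [seq n :: nbrs n | n <- G].

Lemma lap_on_window G h h' : (forall q, q \in closure G -> h q = h' q) ->
  forall n, n \in G -> lap h n = lap h' n.
Proof.
move=> hh' n nG; apply: lap_local => q qn; apply: hh'.
by apply/flattenP; exists (n :: nbrs n) => //; apply/mapP; exists n.
Qed.

Definition sym_range (k : nat) : seq int := [seq i%:Z - k%:Z | i <- iota 0 (2 * k).+1].

Lemma mem_sym_range k (a : int) : (a \in sym_range k) = (`|a| <= k%:Z).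
Proof.
apply/mapP/idP => [[i]|ak]; first by rewrite mem_iota => /andP[_ ik] ->; lia.
by exists (absz (a + k%:Z)); [rewrite mem_iota; lia | lia].
Qed.

Definition bad k y := exists h,
  [/\ forall p, `|h p| <= k%:Z, exists2 n, inbox k n & lap h n != 0
    & Rinf d gamma (cadd y (lap h))].

Definition good k x := exists G, forall y, Rinf d gamma y -> agree_on G x y -> ~ bad k y.

Lemma good_open k : open_in (Rinf d gamma) (good k).
Proof.
move=> x _ [G noBad]; exists G => y _ xy; exists G => z Rz yz; apply: noBad => // p pG.
by rewrite yz // xy.
Qed.

Lemma VsetE x : Vset d gamma x <-> Rinf d gamma x /\ rigid gamma x.
Proof.
split=> [[Rx noMove]|[Rx rx]]; split=> // h hb.
  move=> Rxh n; apply: NNPP => /eqP nz.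
  by apply: noMove hb _ Rxh; exists n.
by move=> [n /eqP nz] Rxh; apply: nz; apply: rx Rxh n.
Qed.

(* Rigid configurations are good: otherwise windows of every size admit a
   bad perturbation, and a compactness argument glues them together. *)
Lemma rigid_good x k : Rinf d gamma x -> rigid gamma x -> good k x.
Proof.
move=> Rx rx; apply: NNPP => notGood.
pose Q G h := Rinf_on G (cadd x (lap h)) /\ exists2 n, n \in box d k & lap h n != 0.
pose supp G := closure (G ++ box d k).
have Q_local G h h' : (forall p, p \in supp G -> h p = h' p) -> Q G h -> Q G h'.
  move=> hh' [win [n nk nz]]; have eq_lap := lap_on_window hh'.
  split; last by exists n; rewrite // -eq_lap // mem_cat nk orbT.
  by apply: Rinf_on_ext win => m mG; rewrite /cadd eq_lap // mem_cat mG.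
have Q_mono G G' h : {subset G <= G'} -> Q G' h -> Q G h.
  by move=> GG' [win nz]; split=> //; apply: Rinf_on_mono win.
have sat G : exists h, valued (sym_range k) h /\ Q G h.
  have [y [Ry xy /NNPP[h [hk [n nk nz] Ryh]]]] :
      exists y, [/\ Rinf d gamma y, agree_on G x y & ~ ~ bad k y].
    apply: NNPP => none; apply: notGood; exists G => y Ry xy byk.
    by apply: none; exists y; split=> //; apply.
  exists h; split=> [p|]; first by rewrite mem_sym_range.
  split; last by exists n; rewrite ?mem_box.
  by apply: Rinf_on_ext (Rinf_onW G Ryh) => m mG; rewrite /cadd xy.
have [h [hk allQ]] := valued_compactness Q_local Q_mono sat.
have [_ [n _ /eqP nz]] := allQ [::].
apply: nz; apply: rx (Rinf_of_windows (fun G => proj1 (allQ G))) n.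
by exists k%:Z => p; rewrite -mem_sym_range.
Qed.

Lemma good_rigid x : Rinf d gamma x -> (forall k, good k x) -> rigid gamma x.
Proof.
move=> Rx allGood h [B hB] Rxh n; apply: NNPP => /eqP nz.
pose k := (absz B + l1norm n)%N.
have [G noBad] := allGood k; apply: (noBad x Rx (fun _ _ => erefl)).
exists h; split=> // [p|]; first by have := hB p; lia.
by exists n; rewrite // (inbox_mono _ (inbox_l1norm n)) ?leq_addl.
Qed.

End Window.

Definition radius d (F : seq (point d)) := (\sum_(q <- F) l1norm q)%N.

Lemma inbox_radius d (F : seq (point d)) q : q \in F -> inbox (radius F) q.
Proof.
move=> qF; apply: inbox_mono (inbox_l1norm q).
by rewrite /radius (big_rem q qF) leq_addr.
Qed.

Lemma rigid_extension d gamma (x : config d) (F : seq (point d)) :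
  (2 <= d)%N -> (2 * d <= gamma)%N -> Rinf d gamma x ->
  exists y, [/\ Rinf d gamma y, agree_on F x y & rigid gamma y].
Proof.
move=> d_ge2 gamma_ge Rx; have [gamma_gt|gamma_le] := ltnP (2 * d) gamma.
  exists (checkerboard gamma x F); split; last exact: checkerboard_rigid.
  - exact: checkerboard_Rinf.
  - by move=> p pF; rewrite /checkerboard pF.
have gamma_eq : gamma = (2 * d)%N by apply/eqP; rewrite eqn_leq gamma_le gamma_ge.
exists (frame gamma x (radius F)); split; last exact: frame_rigid.
- exact: frame_Rinf.
- by move=> p pF; rewrite /frame inbox_radius.
Qed.

Theorem proposition4p4 (d gamma : nat) (hd : (2 <= d)%N) (hg : (2 * d <= gamma)%N) :
  (forall v, Vset d gamma v -> Rinf d gamma v) /\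
  dense_in (Rinf d gamma) (Vset d gamma) /\
  Gdelta_in (Rinf d gamma) (Vset d gamma).
Proof.
split; first by move=> v [].
split.
  move=> U U_open [x [Rx Ux]]; have [F xF_U] := U_open x Rx Ux.
  have [y [Ry xy ry]] := rigid_extension F hd hg Rx.
  by exists y; split; [| apply: xF_U | apply/VsetE].
exists (@good d gamma); split; first exact: good_open.
move=> x Rx; rewrite VsetE; split=> [[_ rx] k|allGood]; first exact: rigid_good.
by split=> //; apply: good_rigid.
Qed.
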